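(* Every (possibly rotated) rectangle $R\subset\mathbb{R}^2$ with side lengths $a$ and $b$ satisfies $N(R)\leqslant(a+\sqrt2)(b+\sqrt2)$.
   Context: For $D\subseteq\mathbb{R}^2$, the integer cardinality is $N(D)=|\mathbb{Z}^2\cap D|$, the number of integer points in $D$. *)

From mathcomp Require Import all_boot all_order all_algebra.
From mathcomp Require Import reals.
Set Implicit Arguments. Unset Strict Implicit. Unset Printing Implicit Defensive.
Import Order.TTheory GRing.Theory Num.Theory.
Local Open Scope ring_scope.

(* The (possibly rotated) closed rectangle with corner p = (p1,p2), first side
   along the unit vector (c, s) of length a, second side along the orthogonal
   unit vector (-s, c) of length b:
     { p + t (c,s) + r (-s,c) : 0 <= t <= a, 0 <= r <= b }. *)
Definition rect (R : realType) (p1 p2 c s a b : R) (x : R * R) : Prop :=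
  exists t r : R, [/\ 0 <= t <= a, 0 <= r <= b,
    x.1 = p1 + t * c - r * s & x.2 = p2 + t * s + r * c].

(* N(D) <= k : the number of integer points in D is at most k, i.e. every
   duplicate-free list of points of Z^2 lying in D has length at most k
   (in particular Z^2 \cap D is finite). *)
Definition N_le (R : realType) (D : R * R -> Prop) (k : R) : Prop :=
  forall l : seq (int * int), uniq l ->
    (forall z, z \in l -> D ((z.1)%:~R, (z.2)%:~R)) ->
    (size l)%:R <= k.

From mathcomp Require Import all_boot all_order all_algebra.
From mathcomp Require Import reals.
From mathcomp Require Import zify ring lra.
Import Order.TTheory GRing.Theory Num.Theory.
Local Open Scope ring_scope.

(* Centre an axis-parallel unit square at each integer point of the
   rectangle: these squares are disjoint and, having circumradius sqrt 2 / 2,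
   lie in the rectangle enlarged by sqrt 2 / 2 on every side, whose area is
   (a + sqrt 2) (b + sqrt 2).  Areas are replaced by counting: the square
   around z is sampled by the n^2 points n z + (i, j), 0 <= i, j < n, which
   are integer points of the n-fold dilate of the enlarged rectangle.  A crude
   count, at most A B + O(A + B + 1) integer points in a rectangle with sides
   A and B (the constants depending on the direction), then gives n^2 N <= n^2 (a + sqrt 2) (b + sqrt 2) + O(n),
   and n -> oo concludes. *)

Lemma size_uniq_int_box (l : seq (int * int)) (x0 y0 : int) (m n : nat) :
  uniq l ->
  (forall z, z \in l -> x0 <= z.1 < x0 + m%:Z /\ y0 <= z.2 < y0 + n%:Z) ->
  (size l <= m * n)%N.
Proof.
move=> ul inl.
set box := [seq (x0 + i%:Z, y0 + j%:Z) | i <- iota 0 m, j <- iota 0 n].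
have -> : (m * n = size box)%N by rewrite size_allpairs !size_iota.
apply: uniq_leq_size => // -[x y] /inl /= [/andP[x0x xm] /andP[y0y yn]].
apply/allpairsP; exists (`|x - x0|%N, `|y - y0|%N) => /=.
by rewrite !mem_iota; split; [lia | lia | congr pair; lia].
Qed.

Lemma euclid_unique (n i i' : nat) (q q' : int) :
  (i < n)%N -> (i' < n)%N -> n%:Z * q + i%:Z = n%:Z * q' + i'%:Z ->
  q = q' /\ i = i'.
Proof.
move=> lt_in lt_i'n e.
have ei : i = i'.
  have := congr1 (fun k => k %% n%:Z)%Z e.
  by rewrite /= ![n%:Z * _]mulrC !modzMDl !modz_small; lia.
by split=> //; move: e; rewrite ei => /addIr /mulfI; apply; lia.
Qed.

Section Counting.
Variable R : realType.

Lemma int_ball_range (k : int) (mu h : R) :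
  `|k%:~R - mu| <= h ->
  Num.ceil (mu - h) <= k < Num.ceil (mu - h) + (`|Num.floor (2 * h)|%N.+1)%:Z.
Proof.
rewrite ler_distl => /andP[lo hi].
have floor_ge0 : 0 <= Num.floor (2 * h) by rewrite floor_ge0; lra.
have ceil_le : Num.ceil (mu - h) <= k by rewrite ceil_le_int.
have : k - Num.ceil (mu - h) <= Num.floor (2 * h).
  by rewrite floor_ge_int rmorphB /=; have := ceil_ge (mu - h); lra.
lia.
Qed.

Lemma natr_floor_succ_le (x : R) : 0 <= x -> (`|Num.floor x|%N.+1)%:R <= x + 1.
Proof.
move=> x0; have floor_ge0 : 0 <= Num.floor x by rewrite floor_ge0.
have -> : (`|Num.floor x|%N.+1)%:R = (Num.floor x + 1)%:~R :> R.
  by have -> : Num.floor x + 1 = (`|Num.floor x|%N.+1)%:Z by lia.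
by rewrite rmorphD /=; have := floor_le x; lra.
Qed.

Lemma size_uniq_sheared_box (l : seq (int * int)) (m : int -> R) (m2 h1 h2 : R) :
  0 <= h1 -> 0 <= h2 -> uniq l ->
  (forall z, z \in l -> `|z.2%:~R - m2| <= h2 /\ `|z.1%:~R - m z.2| <= h1) ->
  (size l)%:R <= (2 * h1 + 1) * (2 * h2 + 1).
Proof.
move=> h1_ge0 h2_ge0 ul inl.
pose unshear (z : int * int) := (z.1 - Num.ceil (m z.2 - h1), z.2).
have unshear_inj : {in l &, injective unshear}.
  by move=> [x y] [x' y'] _ _ [/= e1 e2]; subst y'; congr pair; lia.
have : (size l <= `|Num.floor (2 * h1)|.+1 * `|Num.floor (2 * h2)|.+1)%N.
  rewrite -(size_map unshear); apply: (@size_uniq_int_box _ 0 (Num.ceil (m2 - h2))).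
    by rewrite map_inj_in_uniq.
  move=> _ /mapP[[x y] /inl /= [/int_ball_range hy /int_ball_range hx] ->] /=.
  lia.
rewrite -(ler_nat R) natrM => /le_trans; apply.
by apply: ler_pM; rewrite ?ler0n // natr_floor_succ_le // mulr_ge0.
Qed.

End Counting.

Lemma ler_of_scaled_bounds (R : realType) (x A B C D : R) :
  0 <= A -> 0 <= B -> 0 <= C -> 0 <= D ->
  (forall n : nat, (0 < n)%N -> x <= (n%:R * A + C) * (n%:R * B + D) / n%:R ^+ 2) ->
  x <= A * B.
Proof.
move=> A0 B0 C0 D0 bound; apply/ler_addgt0Pr => e e_gt0.
set K := A * D + B * C + C * D.
have K0 : 0 <= K by rewrite /K; apply: addr_ge0; [apply: addr_ge0|]; apply: mulr_ge0.
pose n := (Num.bound (K / e)).+1.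
have Kn : K < n%:R * e.
  rewrite -ltr_pdivrMr //; apply: lt_le_trans (archi_boundP _) _.
    by rewrite divr_ge0 // ltW.
  by rewrite ler_nat.
have n1 : 1 <= n%:R :> R by rewrite ler1n.
apply: le_trans (bound n isT) _.
rewrite ler_pdivrMr ?exprn_gt0 ?ltr0n //.
have : C * D <= n%:R * (C * D) by rewrite ler_peMl ?mulr_ge0.
rewrite /K in Kn; nra.
Qed.

Section Rectangles.
Variables (R : realType) (c s : R).
Hypothesis cs1 : c ^+ 2 + s ^+ 2 = 1.

Lemma rect_coords (p1 p2 a b x y : R) :
  rect p1 p2 c s a b (x, y) ->
  exists2 t, 0 <= t <= a &
    x - p1 = t * c - ((y - p2) * c - (x - p1) * s) * s /\
    0 <= (y - p2) * c - (x - p1) * s <= b.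
Proof.
move=> [t [r [ta rb /= -> ->]]]; exists t => //.
have -> : (p2 + t * s + r * c - p2) * c - (p1 + t * c - r * s - p1) * s = r.
  by rewrite -[RHS]mulr1 -cs1; ring.
by split=> //; ring.
Qed.

(* With r the second frame coordinate, the map z |-> (z.1, floor (r z / c))
   is injective, since for fixed z.1 the values r z / c differ by integers.
   In the coordinates (x, r / c) the rectangle is a parallelogram whose
   horizontal rows have width A |c|, over a height B / |c|. *)
Lemma N_le_rect_coarse (p1 p2 A B : R) : c != 0 -> 0 <= A -> 0 <= B ->
  N_le (rect p1 p2 c s A B) ((A * `|c| + `|s * c| + 1) * (B / `|c| + 2)).
Proof.
move=> c0 A0 B0 l ul inl.
have c_gt0 : 0 < `|c| by rewrite normr_gt0.
pose w (z : int * int) : R := ((z.2%:~R - p2) * c - (z.1%:~R - p1) * s) / c.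
pose g (z : int * int) := (z.1, Num.floor (w z)).
have g_inj : {in l &, injective g}.
  move=> [x y] [x' y'] _ _ [/= e1]; subst x'.
  have -> : w (x, y) = w (x, y') + (y - y')%:~R by rewrite /w /= rmorphB /=; field.
  rewrite floorDrz ?intr_int // intrKfloor -[RHS]addr0 => /addrI /eqP.
  by rewrite subr_eq0 => /eqP ->.
have -> : (A * `|c| + `|s * c| + 1) * (B / `|c| + 2) =
          (2 * ((A * `|c| + `|s * c|) / 2) + 1) * (2 * ((B / `|c| + 1) / 2) + 1).
  by rewrite ![2 * _]mulrC !divfK ?pnatr_eq0 //; ring.
have := @size_uniq_sheared_box R (map g l)
  (fun j => p1 + (A / 2) * c - (j%:~R + 1 / 2) * (s * c)) (B / (2 * c) - 1 / 2)
  ((A * `|c| + `|s * c|) / 2) ((B / `|c| + 1) / 2).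
rewrite size_map (map_inj_in_uniq g_inj) => /(_ _ _ ul); apply.
- by apply: divr_ge0 => //; apply: addr_ge0 => //; apply: mulr_ge0.
- by apply: divr_ge0 => //; apply: addr_ge0 => //; apply: divr_ge0.
move=> _ /mapP[[x y] /inl/rect_coords [t /andP[t0 tA] [ex /andP[r0 rB]]] ->] /=.
have := floor_itv (w (x, y)); rewrite rmorphD /= => /andP[jw wj].
set j := Num.floor (w (x, y)) in jw wj *.
set r := (y%:~R - p2) * c - (x%:~R - p1) * s in ex r0 rB.
have wr : w (x, y) = r / c by [].
split.
- have -> : j%:~R - (B / (2 * c) - 1 / 2) = (r - B / 2) / c - (w (x, y) - j%:~R - 1 / 2).
    by rewrite wr; field.
  apply: le_trans (ler_normB _ _) _.
  have -> : (B / `|c| + 1) / 2 = (B / 2) / `|c| + 1 / 2 by field; rewrite normr_eq0.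
  apply: lerD; last by rewrite ler_norml; lra.
  by rewrite normrM normfV ler_wpM2r ?invr_ge0 // ler_distl; lra.
- have -> : x%:~R - (p1 + A / 2 * c - (j%:~R + 1 / 2) * (s * c)) =
            (t - A / 2) * c - (w (x, y) - j%:~R - 1 / 2) * (s * c).
    by rewrite wr -[x%:~R](subrK p1) ex; field.
  apply: le_trans (ler_normB _ _) _.
  have -> : (A * `|c| + `|s * c|) / 2 = (A / 2) * `|c| + (1 / 2) * `|s * c| by field.
  rewrite !normrM; apply: lerD; apply: ler_wpM2r;
    rewrite ?mulr_ge0 // ler_norml; lra.
Qed.

Lemma norm_rot_le [x y h : R] :
  `|x| <= h -> `|y| <= h -> `|x * c + y * s| <= Num.sqrt 2 * h.
Proof.
move=> xh yh; have h0 : 0 <= h := le_trans (normr_ge0 x) xh.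
have sq_le z : `|z| <= h -> z ^+ 2 <= h ^+ 2.
  by move=> zh; rewrite -real_normK ?num_real // ler_sqr ?nnegrE.
have lagrange : (x * c + y * s) ^+ 2 + (x * s - y * c) ^+ 2 = x ^+ 2 + y ^+ 2.
  by rewrite -[RHS]mulr1 -cs1; ring.
rewrite -ler_sqr ?nnegrE ?mulr_ge0 ?sqrtr_ge0 // real_normK ?num_real //.
rewrite exprMn sqr_sqrtr //.
by have := sq_le _ xh; have := sq_le _ yh; have := sqr_ge0 (x * s - y * c); lra.
Qed.

Lemma rect_dilate (p1 p2 a b k h o1 o2 z1 z2 d1 d2 : R) :
  0 <= k -> `|d1 - o1| <= h -> `|d2 - o2| <= h -> rect p1 p2 c s a b (z1, z2) ->
  rect (k * p1 + o1 - Num.sqrt 2 * h * (c - s)) (k * p2 + o2 - Num.sqrt 2 * h * (s + c))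
    c s (k * a + 2 * (Num.sqrt 2 * h)) (k * b + 2 * (Num.sqrt 2 * h))
    (k * z1 + d1, k * z2 + d2).
Proof.
move=> k0 d1h d2h [t [r [/andP[t0 ta] /andP[r0 rb] /= -> ->]]].
set u := (d1 - o1) * c + (d2 - o2) * s.
set v := (d2 - o2) * c - (d1 - o1) * s.
have := norm_rot_le d1h d2h; rewrite -/u ler_norml => /andP[u1 u2].
have := @norm_rot_le _ (- (d1 - o1)) _ d2h; rewrite normrN mulNr => /(_ d1h).
rewrite -/v ler_norml => /andP[v1 v2].
have kt0 : 0 <= k * t by apply: mulr_ge0.
have kr0 : 0 <= k * r by apply: mulr_ge0.
have kta : k * t <= k * a by apply: ler_wpM2l.
have krb : k * r <= k * b by apply: ler_wpM2l.
exists (k * t + Num.sqrt 2 * h + u), (k * r + Num.sqrt 2 * h + v).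
split=> /=; try by apply/andP; split; lra.
- by rewrite /u /v -[d1 in LHS](subrK o1) -[d1 - o1 in LHS]mulr1 -cs1; ring.
- by rewrite /u /v -[d2 in LHS](subrK o2) -[d2 - o2 in LHS]mulr1 -cs1; ring.
Qed.

Lemma N_le_rect_dilate (p1 p2 a b K : R) (n : nat) : (0 < n)%N ->
  (forall q1 q2, N_le (rect q1 q2 c s (n%:R * (a + Num.sqrt 2)) (n%:R * (b + Num.sqrt 2))) K) ->
  N_le (rect p1 p2 c s a b) (K / n%:R ^+ 2).
Proof.
move=> n_gt0.
have enlarge e : n%:R * (e + Num.sqrt 2) = n%:R * e + 2 * (Num.sqrt 2 * (n%:R / 2)) :> R.
  by field.
rewrite !enlarge => bound l ul inl.
pose blow := [seq (n%:Z * z.1 + ij.1%:Z, n%:Z * z.2 + ij.2%:Z)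
             | z : int * int <- l, ij : 'I_n * 'I_n <- enum {: 'I_n * 'I_n}].
have size_blow : size blow = (size l * n ^ 2)%N.
  by rewrite size_allpairs -cardT card_prod card_ord mulnn.
have uniq_blow : uniq blow.
  apply: allpairs_uniq; rewrite ?enum_uniq //.
  move=> [[x y] [i j]] [[x' y'] [i' j']] _ _ [] /=.
  move=> /euclid_unique-/(_ (ltn_ord i) (ltn_ord i')) [-> /val_inj ->].
  by move=> /euclid_unique-/(_ (ltn_ord j) (ltn_ord j')) [-> /val_inj ->].
rewrite ler_pdivlMr ?exprn_gt0 ?ltr0n // -natrX -natrM -size_blow.
have half_n : forall i : 'I_n, `|i%:R - (n%:R - 1) / 2| <= n%:R / 2 :> R.
  move=> i; have := ltn_ord i; rewrite -(ler_nat R) -natr1 ler_norml => ?.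
  by have := ler0n R i => ?; apply/andP; split; lra.
apply: bound uniq_blow _ => _ /allpairsP[[z [i j]] [/inl zR _ ->]] /=.
rewrite !rmorphD !rmorphM /=.
exact: rect_dilate (ler0n R n) (half_n i) (half_n j) zR.
Qed.

Lemma N_le_rect (p1 p2 a b : R) : c != 0 -> 0 <= a -> 0 <= b ->
  N_le (rect p1 p2 c s a b) ((a + Num.sqrt 2) * (b + Num.sqrt 2)).
Proof.
move=> c0 a0 b0 l ul inl.
have sqrt2_ge0 : 0 <= Num.sqrt 2 :> R := sqrtr_ge0 2.
have -> : (a + Num.sqrt 2) * (b + Num.sqrt 2) =
          ((a + Num.sqrt 2) * `|c|) * ((b + Num.sqrt 2) / `|c|).
  by field; rewrite normr_eq0.
apply: (@ler_of_scaled_bounds _ _ _ _ (`|s * c| + 1) 2) => //.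
- by rewrite mulr_ge0 ?addr_ge0.
- by rewrite divr_ge0 ?addr_ge0.
- by rewrite addr_ge0.
move=> n n_gt0; rewrite !mulrA addrA.
apply: (N_le_rect_dilate p1 p2 a b _ n n_gt0 _ l ul inl) => q1 q2.
by apply: N_le_rect_coarse; rewrite // mulr_ge0 ?addr_ge0.
Qed.

End Rectangles.

Lemma rect_rotate (R : realType) (p1 p2 c s a b : R) (x : R * R) :
  rect p1 p2 c s a b x -> rect (p1 - b * s) (p2 + b * c) s (- c) b a x.
Proof.
move=> [t [r [ta /andP[r0 rb] e1 e2]]]; exists (b - r), t.
by split=> //; [apply/andP; split; lra | rewrite e1; ring | rewrite e2; ring].
Qed.

Lemma N_le_subset (R : realType) (D D' : R * R -> Prop) (k : R) :
  (forall x, D x -> D' x) -> N_le D' k -> N_le D k.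
Proof. by move=> DD' bound l ul inl; apply: bound ul _ => z /inl /DD'. Qed.

Theorem proposition12 (R : realType) (p1 p2 c s a b : R) :
  c ^+ 2 + s ^+ 2 = 1 -> 0 < a -> 0 < b ->
  N_le (rect p1 p2 c s a b) ((a + Num.sqrt 2) * (b + Num.sqrt 2)).
Proof.
move=> cs1 /ltW a0 /ltW b0.
have [c0 | c_neq0] := eqVneq c 0; last exact: N_le_rect.
have sc1 : s ^+ 2 + (- c) ^+ 2 = 1 by rewrite sqrrN addrC.
have s_neq0 : s != 0.
  by apply: contra_eq_neq cs1 => s0; rewrite c0 s0 expr0n /= addr0 (eq_sym 0) oner_neq0.
rewrite mulrC; apply: N_le_subset (@rect_rotate _ p1 p2 c s a b) _.
exact: N_le_rect.
Qed.
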